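(* Let $M=M(S^2;\frac{q_1}{p_1},\frac{q_2}{p_2},\frac{q_3}{p_3})$ with $e(M)\neq0$, and suppose at most one of $p_1,p_2,p_3$ is even. Then $x_M=0$ if and only if $p_1,p_2,p_3$ are weakly coprime.
   Context: $M(S^2;\frac{q_1}{p_1},\frac{q_2}{p_2},\frac{q_3}{p_3})$ ($(p_i,q_i)$ coprime, $p_i\ge1$) is the closed Seifert manifold obtained from $S_{0,3}\times S^1$ by gluing solid tori whose meridians are $p_ic_i+q_ih_i$; $e(M)=\sum_iq_i/p_i$; $\pi_1(M)=\langle c_1,c_2,c_3,h\mid [c_i,h]=1=c_i^{p_i}h^{q_i},\ c_1c_2c_3=1\rangle$. Weakly coprime: one of $p_1,p_2,p_3$ is coprime with each of the other two. An abelian character is the trace of a diagonal representation $\pi_1(M)\to\mathrm{SL}_2(\mathbb{C})$; it is exceptional if it is the trace of a representation $\rho$ with $\rho(h)=\pm I$ and $\rho(c_i)\neq\pm I$ for $i=1,2,3$; $x_M$ is the number of exceptional abelian characters. *)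

From HB Require Import structures.
From mathcomp Require Import all_boot all_order all_algebra.
From mathcomp Require Import complex.
From mathcomp Require Import Rstruct.
Set Implicit Arguments. Unset Strict Implicit. Unset Printing Implicit Defensive.
Import Order.TTheory GRing.Theory Num.Theory.
Local Open Scope ring_scope.

Definition C := complex Rdefinitions.R.

Definition mat := 'M[C]_2.

(* Generators of pi_1(M): 0,1,2 = c_1,c_2,c_3 ; 3 = h. *)
Definition gen_c (i : 'I_3) : 'I_4 := widen_ord (isT : 3 <= 4)%N i.
Definition gen_h : 'I_4 := ord_max.

Inductive word : Type :=
| Wone : word
| Wgen : 'I_4 -> word
| Wmul : word -> word -> word
| Winv : word -> word.

Fixpoint eval_word (rho : 'I_4 -> mat) (w : word) : mat :=
  match w with
  | Wone => 1
  | Wgen k => rho k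
  | Wmul u v => eval_word rho u * eval_word rho v
  | Winv u => (eval_word rho u)^-1
  end.

(* rho defines a representation pi_1(M) -> SL_2(C), where
   pi_1(M) = < c1,c2,c3,h | [c_i,h]=1 = c_i^{p_i} h^{q_i}, c1 c2 c3 = 1 >. *)
Definition is_SL2_rep (p : 'I_3 -> nat) (q : 'I_3 -> int) (rho : 'I_4 -> mat) : Prop :=
  (forall k, \det (rho k) = 1) /\
  (forall i, rho (gen_c i) * rho gen_h = rho gen_h * rho (gen_c i)) /\
  (forall i, rho (gen_c i) ^+ p i * rho gen_h ^ q i = 1) /\
  rho (gen_c 0) * rho (gen_c 1) * rho (gen_c 2%:R) = 1.

Definition character (rho : 'I_4 -> mat) : word -> C :=
  fun w => \tr (eval_word rho w).

Definition abelian_character p q (chi : word -> C) : Prop :=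
  exists rho, is_SL2_rep p q rho /\ (forall k, is_diag_mx (rho k)) /\
              (forall w, chi w = character rho w).

Definition exceptional_character p q (chi : word -> C) : Prop :=
  exists rho, is_SL2_rep p q rho /\ (forall w, chi w = character rho w) /\
    (rho gen_h = 1 \/ rho gen_h = -1) /\
    (forall i, rho (gen_c i) <> 1 /\ rho (gen_c i) <> -1).

Definition exceptional_abelian_character p q (chi : word -> C) : Prop :=
  abelian_character p q chi /\ exceptional_character p q chi.

Definition xM_eq0 p q : Prop := forall chi, ~ exceptional_abelian_character p q chi.

Definition euler_number (p : 'I_3 -> nat) (q : 'I_3 -> int) : rat :=
  \sum_(i < 3) (q i)%:~R / (p i)%:R.

Definition weakly_coprime (p : 'I_3 -> nat) : Prop :=
  exists i : 'I_3, forall j : 'I_3, j != i -> coprime (p i) (p j).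

(* An exceptional abelian character is the trace of a diagonal
   representation c_i |-> diag(a_i, a_i^-1), and it forces rho(h) = +-1; hence
   a_i^(2 p_i) = 1, a_1 a_2 a_3 = 1, and a_i^2 <> 1, for otherwise the
   exceptional representation with the same trace would send c_i to a matrix
   of SL_2 with trace +-2 and a scalar power, i.e. to +-1.  If p_c is coprime
   to the two other orders, the product relation forces a_c^2 = 1, so x_M = 0.
   If no such c exists, some p_c shares nontrivial factors u and v with the two
   other orders; they are odd because at most one p_i is even, and for a
   primitive (u v)-th root of unity w the triple (w^-(u+v), w^v, w^u) gives an
   exceptional abelian character. *)

From HB Require Import structures.
From mathcomp Require Import all_boot all_algebra all_solvable all_field.
From mathcomp Require Import complex Rstruct.
From mathcomp Require Import zify ring.
Set Implicit Arguments. Unset Strict Implicit. Unset Printing Implicit Defensive.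
Import GRing.Theory Num.Theory.
Local Open Scope ring_scope.

Lemma expr_dvdn_eq1 (R : pzSemiRingType) (x : R) m n :
  x ^+ m = 1 -> (m %| n)%N -> x ^+ n = 1.
Proof. by move=> xm /dvdnP[k ->]; rewrite mulnC exprM xm expr1n. Qed.

Lemma expr_gcdn_eq1 (R : pzRingType) (x : R) m n :
  x ^+ m = 1 -> x ^+ n = 1 -> x ^+ gcdn m n = 1.
Proof.
case: m => [|m] xm xn; first by rewrite gcd0n.
have [a _ /dvdnP[k def_k]] := Bezoutl n (ltn0Sn m).
have : x ^+ (gcdn m.+1 n + a * n) = 1 by rewrite def_k mulnC exprM xm expr1n.
by rewrite exprD mulnC exprM xn expr1n mulr1.
Qed.

Lemma prod_eq1_expr_coprime (R : comPzRingType) (I : finType) (a : I -> R)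
    (p : I -> nat) m c :
  (forall j, j != c -> coprime (p c) (p j)) ->
  (forall i, a i ^+ (m * p i) = 1) -> \prod_i a i = 1 -> a c ^+ m = 1.
Proof.
move=> cop_c a_exp a_prod.
pose P := (\prod_(j | j != c) p j)%N.
have others_exp : (\prod_(j | j != c) a j) ^+ (m * P) = 1.
  rewrite -prodrXl; apply: big1 => j jc.
  by rewrite /P (bigD1 j) //= mulnA exprM a_exp expr1n.
have ac_P : a c ^+ (m * P) = 1.
  have := congr1 (fun x => x ^+ (m * P)) a_prod.
  by rewrite (bigD1 c) //= exprMn others_exp mulr1 expr1n.
have cop_P : coprime (p c) P.
  apply: (big_ind (coprime (p c))) cop_c; first exact: coprimen1.
  by move=> x y; rewrite coprimeMr => -> ->.
by have := expr_gcdn_eq1 (a_exp c) ac_P; rewrite -muln_gcdr (eqP cop_P) muln1.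
Qed.

Lemma prim_root_exists (F : closedFieldType) n :
  n%:R != 0 :> F -> exists z : F, n.-primitive_root z.
Proof.
move=> n_neq0; have n_gt0 : (0 < n)%N by case: n n_neq0 => //; rewrite eqxx.
pose p : {poly F} := 'X^n - 1; have [r Dp] := closed_field_poly_normal p.
rewrite (monicP _) ?monicXnsubC // scale1r in Dp.
have rn1 : all n.-unity_root r by apply/allP=> z; rewrite -root_prod_XsubC -Dp.
have sz_r : (n < (size r).+1)%N.
  by rewrite -(size_prod_XsubC r id) -Dp size_XnsubC.
have [|z] := hasP (has_prim_root n_gt0 rn1 _ sz_r); last by exists z.
by rewrite -separable_prod_XsubC -Dp separable_Xn_sub_1.
Qed.

Lemma exists_noninvolutive_roots (F : fieldType) (w : F) (u v : nat) :
  (u * v).-primitive_root w -> odd u -> odd v -> (1 < u)%N -> (1 < v)%N ->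
  exists x y z : F, [/\ x ^+ lcmn u v = 1, y ^+ u = 1, z ^+ v = 1, x * y * z = 1 &
                         [/\ x ^+ 2 != 1, y ^+ 2 != 1 & z ^+ 2 != 1]].
Proof.
move=> w_prim u_odd v_odd u_gt1 v_gt1.
have gt2 k : odd k -> (1 < k)%N -> (2 < k)%N by case: k => [|[|[]]].
have u_gt2 := gt2 u u_odd u_gt1; have v_gt2 := gt2 v v_odd v_gt1.
have w_eq1 k : (w ^+ k == 1) = (u * v %| k)%N by rewrite (prim_order_dvd w_prim).
have w_neq0 : w != 0.
  apply/eqP => w0; have := prim_expr_order w_prim.
  rewrite w0 expr0n (_ : (u * v == 0)%N = false) => [/esym/eqP|]; last lia.
  by rewrite oner_eq0.
exists (w ^+ (u + v))^-1, (w ^+ v), (w ^+ u); split.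
- apply/eqP; rewrite exprVn -exprM invr_eq1 w_eq1 mulnDl dvdn_add //.
    by rewrite dvdn_pmul2l ?dvdn_lcmr // ltnW.
  by rewrite [(u * v)%N]mulnC dvdn_pmul2l ?dvdn_lcml // ltnW.
- by apply/eqP; rewrite -exprM w_eq1 mulnC.
- by apply/eqP; rewrite -exprM w_eq1.
- by rewrite -mulrA -exprD addnC mulVf // expf_neq0.
split.
- rewrite exprVn -exprM invr_eq1 w_eq1 Gauss_dvdl ?coprimen2 ?oddM ?u_odd //.
  by apply: contraTN isT => /dvdn_leq; lia.
- rewrite -exprM w_eq1 mulnC dvdn_pmul2l; last lia.
  by apply: contraTN isT => /dvdn_leq; lia.
- rewrite -exprM w_eq1 dvdn_pmul2l; last lia.
  by apply: contraTN isT => /dvdn_leq; lia.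
Qed.

Lemma invr_sign (R : idomainType) (s : R) : s ^+ 2 = 1 -> s^-1 = s.
Proof. by move/eqP; rewrite sqrf_eq1 => /orP[]/eqP->; rewrite ?invr1 ?invrN1. Qed.

Lemma eq_sign_of_addr_inv (F : fieldType) (a s : F) :
  a != 0 -> s ^+ 2 = 1 -> a + a^-1 = s *+ 2 -> a = s.
Proof.
move=> a_neq0 s2 a_tr; apply/eqP; rewrite -subr_eq0 -sqrf_eq0.
have -> : (a - s) ^+ 2 = a * (a + a^-1 - s *+ 2).
  by rewrite mulrBr mulrDr mulfV // -s2; ring.
by rewrite a_tr subrr mulr0.
Qed.

Lemma exprz_sign (R : unitRingType) (h : R) (z : int) :
  h = 1 \/ h = -1 -> h ^ z = 1 \/ h ^ z = -1.
Proof.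
case=> ->; first by left; rewrite exp1rz.
have [e ->] : exists e, (-1 : R) ^ z = (-1) ^+ e.
  by case: z => n; [exists n | exists n.+1; rewrite /exprz -exprVn invrN1].
by rewrite -signr_odd; case: odd; [right | left].
Qed.

Lemma mulr_exprz_sign_eq1 (R : unitRingType) (x h : R) (z : int) :
  h = 1 \/ h = -1 -> x * h ^ z = 1 -> x = 1 \/ x = -1.
Proof.
move=> /(exprz_sign z)[->|->]; first by rewrite mulr1; left.
by rewrite mulrN1 => /(canRL (@opprK _)); right.
Qed.

Lemma scalar_mx_sign (R : idomainType) n (s : R) :
  s ^+ 2 = 1 -> s%:M = 1 :> 'M_n \/ s%:M = -1 :> 'M_n.
Proof.
by move/eqP; rewrite sqrf_eq1 => /orP[]/eqP->; [left | right; rewrite raddfN].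
Qed.

Lemma char_poly_mx2 (R : comNzRingType) (A : 'M[R]_2) :
  char_poly A = 'X^2 - (\tr A)%:P * 'X + (\det A)%:P.
Proof.
apply/polyP => -[|[|[|i]]];
  rewrite !(coefD, coefN, coefCM, coefXn, coefX, coefC) /=;
  rewrite ?mulr0 ?mulr1 ?oppr0 ?addr0 ?add0r.
- by rewrite char_poly_det sqrrN expr1n mul1r.
- exact: char_poly_trace.
- have /monicP := char_poly_monic A.
  by rewrite lead_coefE size_char_poly.
- by rewrite nth_default ?size_char_poly.
Qed.

Lemma sl2_trace_sign_nilpotent (R : comNzRingType) (A : 'M[R]_2) s :
  s ^+ 2 = 1 -> \det A = 1 -> \tr A = s *+ 2 -> (s *: A - 1) ^+ 2 = 0.
Proof.
move=> s2 detA trA.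
have -> : s *: A - 1 = horner_mx A (s%:P * 'X - 1).
  by rewrite rmorphB rmorphM /= horner_mx_X horner_mx_C rmorph1 [_ * _]mul_scalar_mx.
rewrite -rmorphXn -[RHS](Cayley_Hamilton A) char_poly_mx2 detA trA; congr horner_mx.
have sP2 : s%:P ^+ 2 = 1 :> {poly R} by rewrite -rmorphXn /= s2.
apply/eqP; rewrite -subr_eq0 polyCMn polyC1; apply/eqP.
by transitivity ((s%:P ^+ 2 - 1) * 'X^2); [ring | rewrite sP2 subrr mul0r].
Qed.

Lemma sl2_trace_sign_scalar (F : fieldType) (A : 'M[F]_2) s n :
  s ^+ 2 = 1 -> \det A = 1 -> \tr A = s *+ 2 -> n%:R != 0 :> F ->
  is_scalar_mx (A ^+ n) -> A = s%:M.
Proof.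
move=> s2 detA trA n_neq0 /is_scalar_mxP[c An].
set N := s *: A - 1; have N2 : N ^+ 2 = 0 := sl2_trace_sign_nilpotent s2 detA trA.
have A_def : A = s *: (1 + N) by rewrite /N addrC subrK scalerA -expr2 s2 scale1r.
have A_exp k : A ^+ k = s ^+ k *: (1 + N *+ k).
  elim: k => [|k IHk]; first by rewrite !expr0 mulr0n addr0 scale1r.
  rewrite exprSr IHk [in _ * A]A_def -scalerAl -scalerAr scalerA -exprSr; congr (_ *: _).
  by rewrite mulrDr mulr1 mulrDl mul1r mulrnAl -expr2 N2 mul0rn addr0 -addrA -mulrSr.
have sn2 : s ^+ n * s ^+ n = 1 by rewrite -exprMn -expr2 s2 expr1n.
have Nn : N *+ n = (s ^+ n * c - 1)%:M.
  rewrite raddfB /= -scale_scalar_mx -An A_exp scalerA sn2 scale1r.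
  by rewrite addrC addKr.
have Nn2 : ((s ^+ n * c - 1) ^+ 2)%:M = 0 :> 'M[F]_2.
  by rewrite rmorphXn /= -Nn expr2 mulrnAl mulrnAr -expr2 N2 !mul0rn.
have e0 : s ^+ n * c - 1 = 0.
  apply/eqP; rewrite -sqrf_eq0.
  by move/(congr1 (fun M : 'M[F]_2 => M 0 0)): Nn2; rewrite !mxE mulr1n => ->.
move: Nn; rewrite e0 raddf0 -scaler_nat => /eqP.
rewrite scaler_eq0 (negPf n_neq0) => /eqP N0.
by rewrite A_def N0 addr0 scalemx1.
Qed.

Section Diag2.

Variable F : fieldType.
Implicit Types (a b s : F).

Definition diag2 a : 'M[F]_2 := diag_mx (\row_j (if j == 0 then a else a^-1)).

Lemma diag2_00 a : diag2 a 0 0 = a.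
Proof. by rewrite !mxE. Qed.

Lemma diag2M a b : diag2 a * diag2 b = diag2 (a * b).
Proof.
rewrite -mulmxE mulmx_diag; congr diag_mx; apply/rowP => j; rewrite !mxE.
by case: eqP => // _; rewrite invfM mulrC.
Qed.

Lemma diag21 : diag2 1 = 1.
Proof. by apply/matrixP => i j; rewrite !mxE invr1; case: eqP. Qed.

Lemma diag2X a n : diag2 a ^+ n = diag2 (a ^+ n).
Proof. by elim: n => [|n IHn]; rewrite ?diag21 // !exprS IHn diag2M. Qed.

Lemma det_diag2 a : \det (diag2 a) = a * a^-1.
Proof. by rewrite det_diag !big_ord_recl big_ord0 !mxE /= mulr1. Qed.

Lemma mxtrace_diag2 a : \tr (diag2 a) = a + a^-1.
Proof. by rewrite mxtrace_diag !big_ord_recl big_ord0 !mxE /= addr0. Qed.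


Lemma diag2_sign s : s ^+ 2 = 1 -> diag2 s = s%:M.
Proof.
move/invr_sign=> s_inv; apply/matrixP => i j; rewrite !mxE s_inv.
by case: eqP => [->|]; case: eqP.
Qed.

Lemma diag_det1_diag2 (A : 'M[F]_2) :
  is_diag_mx A -> \det A = 1 -> A = diag2 (A 0 0).
Proof.
move=> /diag_mxP[d ->]; rewrite det_diag !big_ord_recl big_ord0 mulr1 => d_prod.
have d0_neq0 : d 0 0 != 0.
  by apply: contra_eq_neq d_prod => ->; rewrite mul0r eq_sym oner_neq0.
congr diag_mx; apply/rowP => j; rewrite !mxE; case: eqP => [->|/eqP j_neq0] //.
have -> : j = lift ord0 ord0 by apply: val_inj; case: j j_neq0 => [[|[]]].
by rewrite -[d 0 (lift _ _)](mulKf d0_neq0) d_prod mulr1.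
Qed.


Lemma diag2_sign_sqr a : diag2 a = 1 \/ diag2 a = -1 -> a ^+ 2 = 1.
Proof.
case=> /(congr1 (fun M : 'M[F]_2 => M 0 0)); rewrite diag2_00 !mxE /= => ->.
  by rewrite expr1n.
by rewrite sqrrN expr1n.
Qed.

End Diag2.

Lemma prod_ord3 (R : pzSemiRingType) (f : 'I_3 -> R) :
  \prod_i f i = f 0 * f 1 * f 2%:R.
Proof.
by rewrite !big_ord_recl big_ord0 mulr1 mulrA; congr (_ * f _ * f _); apply: val_inj.
Qed.

Lemma big_uniq_full (R : Type) (idx : R) (op : Monoid.com_law idx) (I : finType)
    (s : seq I) (F : I -> R) :
  uniq s -> (forall i, i \in s) -> \big[op/idx]_i F i = \big[op/idx]_(i <- s) F i.
Proof.
move=> s_uniq s_full; rewrite [RHS]big_uniq //; apply: eq_bigl => i.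
by rewrite s_full.
Qed.

Lemma ord3_enum (c j : 'I_3) :
  j != c -> uniq [:: c; j; - (c + j)] /\ forall i, i \in [:: c; j; - (c + j)].
Proof.
move=> jc; split; last move=> i.
  by move: jc; case: c j => [[|[|[|//]]] ?] [[|[|[|//]]] ?].
by move: jc; case: c j i => [[|[|[|//]]] ?] [[|[|[|//]]] ?] [[|[|[|//]]] ?].
Qed.

Lemma ord3_center (r : rel 'I_3) :
  symmetric r -> (forall i, exists2 j, j != i & r i j) ->
  exists c j, [/\ j != c, r c j & r c (- (c + j))].
Proof.
move=> r_sym cover; have [j j_neq0 r0j] := cover 0.
have [_ k_all] := ord3_enum j_neq0; set k := - (0 + j) in k_all.
have [m m_neq_k rkm] := cover k.
have := k_all m; rewrite !inE (negPf m_neq_k) orbF => /orP[]/eqP m_eq.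
  by rewrite {}m_eq in rkm; exists 0, j; split; rewrite // r_sym.
rewrite {}m_eq in rkm; exists j, 0; split; first by rewrite eq_sym.
  by rewrite r_sym.
by rewrite addr0 -[X in - X]add0r r_sym.
Qed.

Lemma odd_gcdn_of_one_even (I : finType) (p : I -> nat) i j :
  (#|[set k | ~~ odd (p k)]| <= 1)%N -> i != j -> odd (gcdn (p i) (p j)).
Proof.
move=> one_even ij; apply: contraTT one_even; rewrite -dvdn2 -ltnNge => even_g.
apply: (@leq_trans #|[set i; j]|); first by rewrite cards2 ij.
apply/subset_leq_card/subsetP => k; rewrite !inE -dvdn2 => /orP[]/eqP->.
  exact: dvdn_trans even_g (dvdn_gcdl _ _).
exact: dvdn_trans even_g (dvdn_gcdr _ _).
Qed.

Lemma weakly_coprime_or_center (p : 'I_3 -> nat) :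
  weakly_coprime p \/
  exists c j, [/\ j != c, ~~ coprime (p c) (p j) & ~~ coprime (p c) (p (- (c + j)))].
Proof.
pose wc := [exists i, [forall j, (j != i) ==> coprime (p i) (p j)]].
have [/existsP[i /forallP cop_i]|] := boolP wc.
  by left; exists i => j; apply/implyP/cop_i.
rewrite negb_exists => /forallP not_wc; right.
apply: (ord3_center (r := fun i j => ~~ coprime (p i) (p j))) => [i j|i] /=.
  by rewrite coprime_sym.
by have /forallPn[j] := not_wc i; rewrite negb_imply => /andP[ji ncop]; exists j.
Qed.

Section Representations.

Variables (p : 'I_3 -> nat) (q : 'I_3 -> int).

Lemma SL2_rep_exp_sign rho : is_SL2_rep p q rho -> rho gen_h = 1 \/ rho gen_h = -1 ->
  forall i, rho (gen_c i) ^+ p i = 1 \/ rho (gen_c i) ^+ p i = -1.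
Proof. by move=> [_ [_ [rel_c _]]] h_sign i; apply: mulr_exprz_sign_eq1 (rel_c i). Qed.

Lemma exceptional_diag_entries rho1 rho2 :
  (forall i, (0 < p i)%N) ->
  is_SL2_rep p q rho1 -> (forall k, is_diag_mx (rho1 k)) ->
  is_SL2_rep p q rho2 -> (forall k, \tr (rho1 k) = \tr (rho2 k)) ->
  rho2 gen_h = 1 \/ rho2 gen_h = -1 ->
  (forall i, rho2 (gen_c i) <> 1 /\ rho2 (gen_c i) <> -1) ->
  exists a : 'I_3 -> C,
    [/\ forall i, a i ^+ (2 * p i) = 1, \prod_i a i = 1 & forall i, a i ^+ 2 != 1].
Proof.
move=> p_gt0 rep1 diag1 rep2 tr12 h2 c2.
have [[det1 [_ [_ prod1]]] [det2 _]] := (rep1, rep2).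
pose a k := rho1 k 0 0.
have rho1E k : rho1 k = diag2 (a k) := diag_det1_diag2 (diag1 k) (det1 k).
have a_neq0 k : a k != 0.
  apply: contra_eq_neq (det1 k) => ak0.
  by rewrite rho1E det_diag2 ak0 mul0r eq_sym oner_neq0.
have [s s2 h2E] : exists2 s : C, s ^+ 2 = 1 & rho2 gen_h = s%:M.
  by case: h2 => ->; [exists 1 | exists (-1); rewrite ?raddfN]; rewrite ?sqrrN ?expr1n.
have h1 : rho1 gen_h = 1 \/ rho1 gen_h = -1.
  have a_h : a gen_h = s.
    apply: eq_sign_of_addr_inv => //.
    by rewrite -mxtrace_diag2 -rho1E tr12 h2E mxtrace_scalar.
  by rewrite rho1E a_h diag2_sign //; apply: scalar_mx_sign.
exists (fun i => a (gen_c i)); split.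
- move=> i; rewrite mulnC exprM; apply: diag2_sign_sqr.
  by rewrite -diag2X -rho1E; apply: SL2_rep_exp_sign.
- move: prod1; rewrite !rho1E !diag2M -diag21 => /(congr1 (fun M : 'M[C]_2 => M 0 0)).
  by rewrite !diag2_00 prod_ord3.
- move=> i; apply/negP => /eqP ai2.
  have rho2E : rho2 (gen_c i) = (a (gen_c i))%:M.
    apply: (sl2_trace_sign_scalar (n := p i)) => //.
    - by rewrite -tr12 rho1E mxtrace_diag2 invr_sign // mulr2n.
    - by rewrite pnatr_eq0 -lt0n.
    - have [->|->] := SL2_rep_exp_sign rep2 h2 i; apply/is_scalar_mxP.
        by exists 1.
      by exists (-1); rewrite raddfN.
  by have [] := c2 i; rewrite rho2E; case: (scalar_mx_sign 2 ai2).
Qed.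

Lemma roots_not_xM_eq0 (a : 'I_3 -> C) :
  (forall i, a i ^+ p i = 1) -> \prod_i a i = 1 -> (forall i, a i ^+ 2 != 1) ->
  ~ xM_eq0 p q.
Proof.
move=> a_exp a_prod a_sq xM0.
have a_neq0 i : a i != 0.
  by apply: contra_eq_neq a_prod => ai0; rewrite (bigD1 i) //= ai0 mul0r eq_sym oner_neq0.
pose rho k := if k == gen_h then 1 else diag2 (a (inord k)).
have rho_h : rho gen_h = 1 by rewrite /rho eqxx.
have rho_c i : rho (gen_c i) = diag2 (a i).
  rewrite /rho ifN; last by rewrite -val_eqE /= neq_ltn ltn_ord.
  by congr (diag2 (a _)); apply: val_inj; rewrite /= inordK.
have rep : is_SL2_rep p q rho.
  split; [|split; [|split]].
  - by move=> k; rewrite /rho; case: ifP => _; rewrite ?det1 ?det_diag2 ?mulfV.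
  - by move=> i; rewrite rho_h mulr1 mul1r.
  - by move=> i; rewrite rho_c rho_h exp1rz mulr1 diag2X a_exp diag21.
  - by rewrite !rho_c !diag2M -prod_ord3 a_prod diag21.
apply: (xM0 (character rho)); split.
  exists rho; split=> //; split=> // k; rewrite /rho; case: ifP => _.
    exact: (@scalar_mx_is_diag C 2 1).
  exact: diag_mx_is_diag.
exists rho; split=> //; split=> //; split; first by left.
move=> i; rewrite rho_c; split=> rho_sign; move/eqP: (a_sq i); apply.
  by apply: diag2_sign_sqr; left.
by apply: diag2_sign_sqr; right.
Qed.

Lemma center_roots (c j : 'I_3) :
  (forall i, (0 < p i)%N) -> (#|[set i | ~~ odd (p i)]| <= 1)%N -> j != c ->
  ~~ coprime (p c) (p j) -> ~~ coprime (p c) (p (- (c + j))) ->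
  exists a : 'I_3 -> C,
    [/\ forall i, a i ^+ p i = 1, \prod_i a i = 1 & forall i, a i ^+ 2 != 1].
Proof.
move=> p_gt0 one_even jc ncop_j; set k := - (c + j) => ncop_k.
have [cjk_uniq cjk_all] := ord3_enum jc; rewrite -/k in cjk_uniq cjk_all.
have [kc kj] : k != c /\ k != j.
  by move: cjk_uniq; rewrite /= !inE !negb_or !(eq_sym k) => /and3P[/andP[_ ->] ->].
set u := gcdn (p c) (p j); set v := gcdn (p c) (p k).
have gcd_gt1 l : ~~ coprime (p c) (p l) -> (1 < gcdn (p c) (p l))%N.
  by rewrite /coprime => ncop; have := gcdn_gt0 (p c) (p l); rewrite p_gt0; lia.
have [w w_prim] : exists w : C, (u * v).-primitive_root w.
  apply: prim_root_exists; rewrite pnatr_eq0 muln_eq0 negb_or -!lt0n.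
  by rewrite !(ltnW (gcd_gt1 _ _)).
have [||||x [y [z [x_exp y_exp z_exp xyz [x_sq y_sq z_sq]]]]] :=
  exists_noninvolutive_roots w_prim; try exact: gcd_gt1.
- by apply: odd_gcdn_of_one_even; rewrite // eq_sym.
- by apply: odd_gcdn_of_one_even; rewrite // eq_sym.
exists (fun i => if i == c then x else if i == j then y else z); split.
- move=> i; have := cjk_all i; rewrite !inE => /or3P[]/eqP->.
  + by rewrite eqxx; apply: expr_dvdn_eq1 x_exp _; rewrite dvdn_lcm !dvdn_gcdl.
  + by rewrite (negPf jc) eqxx; apply: expr_dvdn_eq1 y_exp (dvdn_gcdr _ _).
  + by rewrite (negPf kc) (negPf kj); apply: expr_dvdn_eq1 z_exp (dvdn_gcdr _ _).
- rewrite (big_uniq_full _ _ cjk_uniq cjk_all) !big_cons big_nil.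
  by rewrite /= eqxx (negPf jc) eqxx (negPf kc) (negPf kj) mulr1 mulrA.
- by move=> i; do 2?case: ifP.
Qed.

Lemma weakly_coprime_xM_eq0 : (forall i, (0 < p i)%N) -> weakly_coprime p -> xM_eq0 p q.
Proof.
move=> p_gt0 [c cop_c] chi [[rho1 [rep1 [diag1 chi1]]] [rho2 [rep2 [chi2 [h2 c2]]]]].
have tr12 k : \tr (rho1 k) = \tr (rho2 k).
  by rewrite -[LHS]/(character rho1 (Wgen k)) -chi1 chi2.
have [a [a_exp a_prod a_sq]] := exceptional_diag_entries p_gt0 rep1 diag1 rep2 tr12 h2 c2.
by have := a_sq c; rewrite (prod_eq1_expr_coprime cop_c a_exp a_prod) eqxx.
Qed.

Lemma xM_eq0_weakly_coprime :
  (forall i, (0 < p i)%N) -> (#|[set i | ~~ odd (p i)]| <= 1)%N ->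
  xM_eq0 p q -> weakly_coprime p.
Proof.
move=> p_gt0 one_even xM0.
have [//|[c [j [jc ncop_j ncop_k]]]] := weakly_coprime_or_center p.
have [a [a_exp a_prod a_sq]] := center_roots p_gt0 one_even jc ncop_j ncop_k.
by case: (roots_not_xM_eq0 a_exp a_prod a_sq).
Qed.

End Representations.

Theorem corollary5p7 (p : 'I_3 -> nat) (q : 'I_3 -> int)
  (hp : forall i, (0 < p i)%N)
  (hcop : forall i, coprime (p i) `|q i|%N)
  (he : euler_number p q != 0)
  (heven : (#|[set i : 'I_3 | ~~ odd (p i)]| <= 1)%N) :
  xM_eq0 p q <-> weakly_coprime p.
Proof.
split; [exact: xM_eq0_weakly_coprime | exact: weakly_coprime_xM_eq0].
Qed.
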